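(* Let $A \subset \mathbb{Z}$ be a finite set with $\min A = 0$, $\max A = b$, and $\gcd A = 1$. For $v \in \{0, b\}$ let $T_v(A) = \bigcup_{h \geq 0} h(A - v)$ and $\sigma_v(x) = \sum_{a \in T_v(A)} x^a$. Then both $\sigma_0(x)$ and $\sigma_b(x)$ are rational functions of $x$, and for all integers $h \geq 0$ with $h \geq 2b - 4$, \[ \sigma_{hA}(x) = \sigma_0(x) + x^{hb}\,\sigma_b(x), \] where $\sigma_{hA}(x) = \sum_{a \in hA} x^a$.
   Context: For a finite set $B \subset \mathbb{Z}$ and integer $h \geq 0$, $hB = \{b_1 + \cdots + b_h : b_i \in B\}$, with $0B = \{0\}$, and $A - v = \{a - v : a \in A\}$. Note $T_0(A) \subseteq \mathbb{N}$ so $\sigma_0$ is a formal power series in $x$, while $T_b(A) \subseteq -\mathbb{N}$ so $\sigma_b$ is a formal power series in $x^{-1}$; ''rational function'' means these series are expansions of rational functions in $x$, and the displayed identity is an identity of rational functions. Here $\mathbb{N} = \{0,1,2,\ldots\}$. *)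

From HB Require Import structures.
From mathcomp Require Import all_boot all_order all_algebra.
From Stdlib Require Import ClassicalEpsilon.
Set Implicit Arguments. Unset Strict Implicit. Unset Printing Implicit Defensive.
Import Order.TTheory GRing.Theory Num.Theory.
Local Open Scope ring_scope.

(* A finite set of integers is represented by a list (duplicates irrelevant). *)

Definition gcd_set (A : seq int) : int := \big[gcdz/0]_(a <- A) a.

Definition shift_set (A : seq int) (v : int) : seq int := [seq a - v | a <- A].

Fixpoint sumset (B : seq int) (h : nat) : seq int :=
  match h with
  | 0 => [:: 0]
  | h'.+1 => [seq a + s | a <- B, s <- sumset B h']
  end.

Definition inT (A : seq int) (v : int) (n : int) : Prop :=
  exists h : nat, n \in sumset (shift_set A v) h.

Definition ind (P : Prop) : rat :=
  if excluded_middle_informative P then 1 else 0.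

(* The formal power series with coefficients c (c n = coefficient of y^n)
   is the expansion of the rational function p/q, i.e. q(0) <> 0 and
   q * (sum c n y^n) = p as formal power series. *)
Definition expands (c : nat -> rat) (p q : {poly rat}) : Prop :=
  q`_0 != 0 /\
  forall n : nat, \sum_(i < n.+1) q`_i * c (n - i)%N = p`_n.

Definition RF := {fraction {poly rat}}.
Definition xRF : RF := tofrac 'X.

Definition eval_inv (p : {poly rat}) : RF :=
  \sum_(i < size p) tofrac (p`_i)%:P * xRF ^- i.

Definition sigma_sumset (A : seq int) (h : nat) : RF :=
  \sum_(a <- undup (sumset A h)) xRF ^ a.

(* Let S = \bigcup_h hA and S' = \bigcup_h h(b - A), so that T_0(A) = S
   and T_b(A) = -S'.  Every n in S can be written n = u b + y with y a sum of r < b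
   elements of A lying strictly between 0 and b (pigeonhole on prefix sums modulo b),
   and then n is in (u + r)A.  With gcd A = 1 this gives the Frobenius-type bound: S
   and S' (note gcd (b - A) = 1) contain every n >= (b - 1)(b - 2), so sigma_0 and
   sigma_b are polynomials divided by 1 - x.  For h >= 2b - 4 the same representation
   shows that n in [0, hb] lies in hA iff n is in S and hb - n is in S', and that at
   least one of these always holds.  Hence [n in hA] = [n in S] + [hb - n in S'] - 1
   on [0, hb]; summing against x^n, the tails of sigma_0 and x^hb sigma_b beyond hb
   are geometric series that cancel the -1's. *)

From HB Require Import structures.
From mathcomp Require Import all_boot all_order all_algebra.
From mathcomp Require Import zify ring.
From Stdlib Require Import ClassicalEpsilon.
Set Implicit Arguments. Unset Strict Implicit. Unset Printing Implicit Defensive.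
Import Order.TTheory GRing.Theory Num.Theory.
Local Open Scope ring_scope.

Lemma sumset_add (B : seq int) j k x y :
  x \in sumset B j -> y \in sumset B k -> x + y \in sumset B (j + k).
Proof.
elim: j x => [|j IH] x /=; first by rewrite inE => /eqP -> Hy; rewrite add0r.
move=> /allpairsP[[a s] [/= Ha Hs ->]] Hy.
by rewrite -addrA; apply: allpairs_f => //; apply: IH.
Qed.

Lemma sumset_sum (B t : seq int) :
  {subset t <= B} -> \sum_(x <- t) x \in sumset B (size t).
Proof.
elim: t => [|a t IH] Ht /=; first by rewrite big_nil inE.
rewrite big_cons; apply: allpairs_f; first by apply: Ht; rewrite mem_head.
by apply: IH => y Hy; apply: Ht; rewrite inE Hy orbT.
Qed.

Lemma sumset_mul (B : seq int) (b : int) u : b \in B -> u%:Z * b \in sumset B u.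
Proof.
move=> Bb; elim: u => [|u IH] /=; first by rewrite mul0r inE.
by rewrite intS mulrDl mul1r; apply: allpairs_f.
Qed.

Lemma sumset_mono (B : seq int) j k x :
  0 \in B -> (j <= k)%N -> x \in sumset B j -> x \in sumset B k.
Proof.
move=> B0 /subnKC <- Hx; rewrite -[x]addr0; apply: sumset_add Hx _.
by rewrite -[0](mulr0 (k - j)%N%:Z); apply: sumset_mul.
Qed.

Lemma sumset_range (B : seq int) (b : int) k x :
  (forall a, a \in B -> 0 <= a <= b) -> x \in sumset B k -> 0 <= x <= k%:Z * b.
Proof.
move=> B_range; elim: k x => [|k IH] x /=; first by rewrite inE => /eqP ->; rewrite mul0r lexx.
move=> /allpairsP[[a s] [/= Ha Hs ->]].
move: (B_range a Ha) (IH s Hs); rewrite intS mulrDl mul1r; lia.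
Qed.

Definition mirror (B : seq int) (b : int) : seq int := [seq b - a | a <- B].

Lemma mem_mirror (B : seq int) b a : a \in B -> b - a \in mirror B b.
Proof. exact: map_f. Qed.

Lemma mirrorK (B : seq int) b : mirror (mirror B b) b = B.
Proof.
by rewrite /mirror -map_comp -[RHS]map_id; apply: eq_map => a /=; rewrite opprB addrC subrK.
Qed.

Lemma sumset_mirror (B : seq int) (b : int) k x :
  x \in sumset B k -> k%:Z * b - x \in sumset (mirror B b) k.
Proof.
elim: k x => [|k IH] x /=; first by rewrite inE => /eqP ->; rewrite mul0r subr0 inE.
move=> /allpairsP[[a s] [/= Ha Hs ->]].
have -> : k.+1%:Z * b - (a + s) = (b - a) + (k%:Z * b - s) by rewrite intS; ring.
by apply: allpairs_f; [apply: map_f | apply: IH].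
Qed.

Lemma sumset_opp (B : seq int) k x :
  (x \in sumset [seq - a | a <- B] k) = (- x \in sumset B k).
Proof.
elim: k x => [|k IH] x /=; first by rewrite !inE oppr_eq0.
apply/allpairsP/allpairsP => [[[a s] [/= /mapP[a' Ha' ->] Hs ->]]|[[a s] [/= Ha Hs E]]].
  by exists (a', - s); rewrite /= -IH opprD opprK.
by exists (- a, - s); rewrite /= IH opprK map_f // -[x]opprK E opprD.
Qed.

Definition gen (B : seq int) (n : int) : Prop := exists k, n \in sumset B k.

Lemma gen0 B : gen B 0.
Proof. by exists 0%N; rewrite inE. Qed.

Lemma gen_mem B a : a \in B -> gen B a.
Proof. by move=> Ba; exists 1%N; rewrite -[a]addr0; apply: allpairs_f; rewrite ?inE. Qed.

Lemma gen_add B x y : gen B x -> gen B y -> gen B (x + y).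
Proof. by move=> [j Hx] [k Hy]; exists (j + k)%N; apply: sumset_add. Qed.

Lemma gen_mul B (k : nat) x : gen B x -> gen B (k%:Z * x).
Proof.
move=> Hx; elim: k => [|k IH]; first by rewrite mul0r; apply: gen0.
by rewrite intS mulrDl mul1r; apply: gen_add.
Qed.

Lemma prefix_sums_congr (t : seq int) (b : nat) : (0 < b)%N -> (b <= size t)%N ->
  exists i j, [/\ (i < j <= b)%N &
    (b%:Z %| \sum_(x <- take j t) x - \sum_(x <- take i t) x)%Z].
Proof.
move=> b_gt0 b_le.
have bz_neq0 : b%:Z != 0 by lia.
pose res i := ((\sum_(x <- take i t) x) %% b%:Z)%Z.
pose f i := absz (res i).
have res_range i : 0 <= res i < b%:Z by rewrite modz_ge0 ?ltz_mod.
have : ~~ uniq (map f (iota 0 b.+1)).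
  apply/negP => f_uniq; suff : (b.+1 <= b)%N by rewrite ltnn.
  rewrite -{1}(size_iota 0 b.+1) -(size_map f) -{2}(size_iota 0 b).
  apply: uniq_leq_size f_uniq _ => _ /mapP[i _ ->].
  by rewrite mem_iota add0n /f; have := res_range i; lia.
case/(uniqPn 0) => i [j [ij]]; rewrite size_map size_iota => j_lt.
rewrite !(nth_map 0) ?size_iota ?nth_iota 1?(ltn_trans ij) // !add0n => fij.
exists i, j; rewrite ij -ltnS j_lt -eqz_mod_dvd; split=> //; apply/eqP.
by move: fij (res_range i) (res_range j); rewrite /f /res; lia.
Qed.

Lemma sum_shorten_mod (t : seq int) (b : nat) : (0 < b)%N ->
  (forall x, x \in t -> 0 <= x) ->
  exists (u : nat) (t' : seq int), [/\ (size t' < b)%N, {subset t' <= t} &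
    \sum_(x <- t) x = u%:Z * b%:Z + \sum_(x <- t') x].
Proof.
move=> b_gt0; elim: {t}(size t) {-2}t (leqnn (size t)) => [|n IH] t t_size t_ge0.
  by exists 0%N, t; rewrite mul0r add0r; split => //; lia.
have [small|big] := ltnP (size t) b.
  by exists 0%N, t; rewrite mul0r add0r; split.
have [i [j [/andP[ij jb] dvd_block]]] := prefix_sums_congr b_gt0 big.
pose t1 := take i t ++ drop j t.
have t1_sub : {subset t1 <= t} by move=> x; rewrite mem_cat => /orP[/mem_take|/mem_drop].
have [|u [t' [t'_size t'_sub sum_t1]]] := IH t1 _ (fun x x_t1 => t_ge0 x (t1_sub x x_t1)).
  by rewrite size_cat size_drop size_takel; lia.
set d := \sum_(x <- drop i (take j t)) x.
have sum_take_j : \sum_(x <- take j t) x = \sum_(x <- take i t) x + d.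
  by rewrite -{1}(cat_take_drop i (take j t)) take_takel 1?ltnW // big_cat.
rewrite sum_take_j addrC addKr in dvd_block.
have sum_t : \sum_(x <- t) x = \sum_(x <- t1) x + d.
  by rewrite -{1}(cat_take_drop j t) big_cat sum_take_j /t1 big_cat addrAC.
have d_ge0 : 0 <= d by rewrite /d big_seq sumr_ge0 // => x /mem_drop/mem_take/t_ge0.
have [q d_eq] := dvdzP dvd_block.
have q_ge0 : 0 <= q by move: d_ge0; rewrite d_eq pmulr_lge0 //; lia.
exists (u + absz q)%N, t'; split=> //; first by move=> x /t'_sub/t1_sub.
by rewrite sum_t sum_t1 d_eq PoszD gez0_abs //; ring.
Qed.

Lemma sum_range (t : seq int) (lo hi : int) : (forall x, x \in t -> lo <= x <= hi) ->
  (size t)%:Z * lo <= \sum_(x <- t) x <= (size t)%:Z * hi.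
Proof.
elim: t => [|a t IH] t_range; first by rewrite big_nil !mul0r lexx.
rewrite big_cons /= intS !mulrDl !mul1r.
have := IH (fun x x_t => t_range x (mem_behead (s := a :: t) x_t)).
have := t_range a (mem_head _ _).
by move=> /andP[? ?] /andP[? ?]; apply/andP; split; apply: lerD.
Qed.

Section Normalized.

Variables (B : seq int) (b : nat).
Hypothesis B_range : forall a, a \in B -> 0 <= a <= b%:Z.
Hypothesis b_gt0 : (0 < b)%N.

Lemma sumset_decomp k n : n \in sumset B k ->
  exists (u : nat) (t : seq int),
    {subset t <= [pred a in B | 0 < a < b%:Z]} /\ n = u%:Z * b%:Z + \sum_(x <- t) x.
Proof.
elim: k n => [|k IH] n /=.
  by rewrite inE => /eqP ->; exists 0%N, [::]; rewrite big_nil mul0r addr0.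
move=> /allpairsP[[a s] [/= Ba s_k ->]].
have [u [t [t_sub ->]]] := IH s s_k.
have [->|a_neq0] := eqVneq a 0; first by exists u, t; rewrite add0r.
have [->|a_neqb] := eqVneq a b%:Z; first by exists u.+1, t; split=> //; rewrite intS; ring.
exists u, (a :: t); split; last by rewrite big_cons; ring.
move=> x; rewrite inE => /predU1P[->|/t_sub //].
by rewrite inE Ba /=; move: (B_range Ba) a_neq0 a_neqb; lia.
Qed.

Lemma reduced_repr n : gen B n ->
  exists (u r : nat) (y : int), [/\ (r < b)%N, r%:Z <= y <= r%:Z * (b%:Z - 1),
    y \in sumset B r & n = u%:Z * b%:Z + y].
Proof.
move=> [k /sumset_decomp[u [t [t_sub ->]]]].
have [|u' [t' [t'_size t'_sub ->]]] := @sum_shorten_mod t b b_gt0.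
  by move=> x /t_sub; rewrite inE => /andP[_ /andP[/ltW]].
have t'_inner x : x \in t' -> (x \in B) && (0 < x < b%:Z) by move=> /t'_sub/t_sub.
exists (u + u')%N, (size t'), (\sum_(x <- t') x); split=> //.
- by rewrite -[X in X <= _]mulr1; apply: sum_range => x /t'_inner; lia.
- by apply: sumset_sum => x /t'_inner/andP[].
- by rewrite PoszD; ring.
Qed.

Lemma gen_congr_gcd L : {subset L <= B} ->
  exists s, gen B s /\ (b%:Z %| s - gcd_set L)%Z.
Proof.
have nat_rep z : (b%:Z %| (absz (z %% b%:Z)%Z)%:Z - z)%Z.
  by rewrite gez0_abs ?modz_ge0 // -?eqz_mod_dvd ?modz_mod //; lia.
elim: L => [|a L IH] L_sub.
  by exists 0; rewrite /gcd_set big_nil subrr dvdz0; split=> //; apply: gen0.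
have [s [gen_s dvd_s]] := IH (fun x x_L => L_sub x (mem_behead (s := a :: L) x_L)).
have [u [v uv]] := Bezoutz a (gcd_set L).
pose u' := absz (u %% b%:Z)%Z; pose v' := absz (v %% b%:Z)%Z.
exists (u'%:Z * a + v'%:Z * s); split.
  by apply: gen_add; apply: gen_mul => //; apply/gen_mem/L_sub/mem_head.
rewrite /gcd_set big_cons -/(gcd_set L) -uv.
have -> : u'%:Z * a + v'%:Z * s - (u * a + v * gcd_set L)
        = (u'%:Z - u) * a + (v'%:Z - v) * s + v * (s - gcd_set L) by ring.
by rewrite rpredD ?dvdz_mull // rpredD ?dvdz_mulr ?nat_rep.
Qed.

Lemma frobenius_gen n : b%:Z \in B -> gcd_set B = 1 -> (b%:Z - 1) * (b%:Z - 2) <= n -> gen B n.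
Proof.
move=> Bb gcd1 n_ge.
have [s [gen_s]] := @gen_congr_gcd B (fun x x_B => x_B); rewrite gcd1 => /dvdzP[q s_eq].
have n_ge0 : 0 <= n.
  by apply: le_trans n_ge; case: (b) b_gt0 => [|[|b']] // _; nia.
have [u [r [y [r_lt /andP[_ y_le] y_r ns_eq]]]] := reduced_repr (gen_mul (absz n) gen_s).
rewrite gez0_abs // in ns_eq.
have [j n_eq] : exists j, n - y = j * b%:Z.
  have s_eq' : s = q * b%:Z + 1 by rewrite -s_eq subrK.
  exists (u%:Z - n * q).
  have -> : y = n * (q * b%:Z + 1) - u%:Z * b%:Z by rewrite -s_eq' ns_eq; ring.
  ring.
have [j_ge0|j_lt0] := leP 0 j.
  exists (absz j + r)%N; rewrite -(subrK y n) n_eq -[j]gez0_abs //.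
  by apply: sumset_add y_r; apply: sumset_mul.
(* j < 0 would force n <= y - b <= r (b - 1) - b < (b - 1) (b - 2). *)
have : r%:Z * (b%:Z - 1) <= (b%:Z - 1) * (b%:Z - 1) by nia.
have : j * b%:Z <= - b%:Z by nia.
nia.
Qed.

End Normalized.

Lemma inT0 A n : inT A 0 n = gen A n.
Proof. by rewrite /inT /shift_set (eq_map (g := id)) ?map_id // => a; rewrite subr0. Qed.

Lemma inT_mirror A v m : inT A v (- m) <-> gen (mirror A v) m.
Proof.
have -> : mirror A v = [seq - a | a <- shift_set A v].
  by rewrite /mirror /shift_set -map_comp; apply: eq_map => a /=; rewrite opprB.
by split=> [[k]|[k]]; exists k; rewrite ?sumset_opp // -sumset_opp.
Qed.

Lemma dvdz_gcd_set d L : (d %| gcd_set L)%Z = all (fun a => d %| a)%Z L.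
Proof.
elim: L => [|a L IH]; first by rewrite /gcd_set big_nil dvdz0.
by rewrite /gcd_set big_cons -/(gcd_set L) dvdz_gcd IH.
Qed.

Lemma gcd_set_ge0 L : 0 <= gcd_set L.
Proof. by case: L => [|a L]; rewrite /gcd_set ?big_cons ?big_nil. Qed.

Lemma gcd_set_mirror A (b : int) : 0 \in A -> gcd_set A = 1 -> gcd_set (mirror A b) = 1.
Proof.
move=> A0 gcd1; set g := gcd_set _.
have /allP g_dvd : all (fun a => g %| a)%Z (mirror A b) by rewrite -dvdz_gcd_set.
have g_dvd_b : (g %| b)%Z by rewrite -[b]subr0 g_dvd ?mem_mirror.
have : (g %| gcd_set A)%Z.
  rewrite dvdz_gcd_set; apply/allP => a Aa.
  by rewrite -(subKr b a) rpredB // g_dvd ?mem_mirror.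
by rewrite gcd1 dvdz1 => /eqP; have := gcd_set_ge0 (mirror A b); rewrite -/g; lia.
Qed.

Lemma gcd_set_range_gt0 A (b : nat) : (forall a, a \in A -> 0 <= a <= b%:Z) ->
  gcd_set A = 1 -> (0 < b)%N.
Proof.
case: b => // A_range gcd1.
suff : (0 %| gcd_set A)%Z by rewrite gcd1.
rewrite dvdz_gcd_set; apply/allP => a /A_range a_range.
by rewrite (_ : a = 0) ?dvdz0 //; lia.
Qed.

Lemma ind_bool (P : Prop) (c : bool) : (P <-> c) -> ind P = c%:R.
Proof.
rewrite /ind; case: excluded_middle_informative => HP; case: c => -[Pc cP] //.
  by have := Pc HP.
by case: HP; apply: cP.
Qed.

Lemma ind_true (P : Prop) : P -> ind P = 1.
Proof. by move=> HP; rewrite (ind_bool (c := true)). Qed.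

Lemma ind_iff (P Q : Prop) : (P <-> Q) -> ind P = ind Q.
Proof.
rewrite /ind => PQ; case: excluded_middle_informative => HP;
  by case: excluded_middle_informative => HQ //; exfalso; tauto.
Qed.

Lemma ind_and_or (P Q : Prop) : P \/ Q -> ind (P /\ Q) = ind P + ind Q - 1.
Proof.
rewrite /ind => PQ; case: excluded_middle_informative => HPQ;
  case: excluded_middle_informative => HP; case: excluded_middle_informative => HQ;
  rewrite ?addrK ?add0r ?addr0 ?subrr //; exfalso; tauto.
Qed.

Section Mirror.

Variables (A : seq int) (b : nat).
Hypotheses (A0 : 0 \in A) (Ab : b%:Z \in A) (A_range : forall a, a \in A -> 0 <= a <= b%:Z).
Hypothesis b_gt0 : (0 < b)%N.

Local Notation A' := (mirror A b%:Z).

Let A'0 : 0 \in A'. Proof. by have := mem_mirror b%:Z Ab; rewrite subrr. Qed.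
Let A'b : b%:Z \in A'. Proof. by have := mem_mirror b%:Z A0; rewrite subr0. Qed.
Let A'_range a : a \in A' -> 0 <= a <= b%:Z.
Proof. by move=> /mapP[x /A_range x_range ->]; lia. Qed.

Lemma gen_large n : gcd_set A = 1 -> (b%:Z - 1) * (b%:Z - 2) <= n -> gen A n /\ gen A' n.
Proof.
move=> gcd1 n_ge; split; first exact: (frobenius_gen A_range b_gt0 Ab gcd1 n_ge).
exact: (frobenius_gen A'_range b_gt0 A'b (gcd_set_mirror _ A0 gcd1) n_ge).
Qed.

Lemma ind_inT_large n : gcd_set A = 1 -> ((b - 1) * (b - 2) <= n)%N ->
  ind (inT A 0 n%:Z) = 1 /\ ind (inT A b%:Z (- n%:Z)) = 1.
Proof.
move=> gcd1 n_ge; have [|gen_n gen'_n] := @gen_large n%:Z gcd1; first by nia.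
by split; apply: ind_true; [rewrite inT0 | apply/inT_mirror].
Qed.

Section LargeSumsets.

Variable h : nat.
Hypothesis h_large : 2 * b%:Z - 4 <= h%:Z.

Lemma sumset_gen n : n \in sumset A h -> gen A n /\ gen A' (h%:Z * b%:Z - n).
Proof. by move=> n_h; split; exists h => //; apply: sumset_mirror. Qed.

Lemma gen_sumset n : gen A n -> gen A' (h%:Z * b%:Z - n) -> n \in sumset A h.
Proof.
move=> /(reduced_repr A_range b_gt0)[u [r [y [r_lt /andP[r_le _] y_r n_eq]]]].
move=> /(reduced_repr A'_range b_gt0)[v [s [z [s_lt /andP[s_le _] z_s n'_eq]]]].
have [uh|hu] := leqP (u + r) h.
  by apply: (sumset_mono A0 uh); rewrite n_eq; apply: sumset_add y_r; apply: sumset_mul.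
have [vh|hv] := leqP (v + s) h.
  rewrite -(mirrorK A b%:Z) -[n](subKr (h%:Z * b%:Z)); apply: sumset_mirror.
  by apply: (sumset_mono A'0 vh); rewrite n'_eq; apply: sumset_add z_s; apply: sumset_mul.
(* Otherwise h b = (u + v) b + y + z >= (2 h + 2 - r - s) b + r + s > h b. *)
have : 0 <= (u%:Z + v%:Z - (2 * h%:Z + 2 - r%:Z - s%:Z)) * b%:Z by apply: mulr_ge0; lia.
have : 0 <= (h%:Z + 2 - r%:Z - s%:Z) * b%:Z by apply: mulr_ge0; lia.
nia.
Qed.

Lemma gen_or_gen n : gcd_set A = 1 -> 0 <= n <= h%:Z * b%:Z ->
  gen A n \/ gen A' (h%:Z * b%:Z - n).
Proof.
move=> gcd1 n_range.
have [n_ge|n_lt] := leP ((b%:Z - 1) * (b%:Z - 2)) n.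
  by left; apply: (gen_large gcd1 n_ge).1.
right; apply: (gen_large gcd1 _).2.
have : 0 <= (h%:Z - (2 * b%:Z - 4)) * b%:Z by apply: mulr_ge0; lia.
case: (b) b_gt0 n_lt => [|[|b']] //= _; nia.
Qed.

Lemma sumset_indicator n : gcd_set A = 1 -> (n <= h * b)%N ->
  ind (inT A 0 n%:Z) + ind (inT A b%:Z (- (h * b - n)%N%:Z)) - 1 = (n%:Z \in sumset A h)%:R.
Proof.
move=> gcd1 n_le.
have -> : (h * b - n)%N%:Z = h%:Z * b%:Z - n%:Z by rewrite subzn // PoszM.
rewrite inT0 (ind_iff (inT_mirror _ _ _)) -ind_and_or; last by apply: gen_or_gen => //; lia.
by apply: ind_bool; split=> [[]|]; [apply: gen_sumset | apply: sumset_gen].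
Qed.

End LargeSumsets.

End Mirror.

Definition ratF (r : rat) : RF := tofrac r%:P.
HB.instance Definition _ := GRing.RMorphism.copy ratF (@tofrac _ \o polyC).

Definition tail_poly (N : nat) (c : nat -> rat) : {poly rat} :=
  (1 - 'X) * \poly_(i < N) c i + 'X^N.

Lemma horner_map_poly (y : RF) M (c : nat -> rat) :
  (map_poly ratF (\poly_(i < M) c i)).[y] = \sum_(i < M) ratF (c i) * y ^+ i.
Proof.
rewrite (@horner_coef_wide _ M) ?size_map_poly ?size_poly //.
by apply: eq_bigr => i _; rewrite coef_map coef_poly ltn_ord.
Qed.

Section TailPoly.

Variables (N : nat) (c : nat -> rat).
Hypothesis c_one : forall n, (N <= n)%N -> c n = 1.

Lemma tail_polyE M : (N <= M)%N -> tail_poly N c = (1 - 'X) * \poly_(i < M) c i + 'X^M.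
Proof.
move=> /subnKC <-; elim: (M - N)%N => [|k IH]; first by rewrite addn0.
rewrite IH addnS [in RHS]poly_def big_ord_recr -poly_def /= c_one ?leq_addr //.
by rewrite scale1r exprSr; ring.
Qed.

Lemma expands_tail_poly : expands c (tail_poly N c) (1 - 'X).
Proof.
split=> [|n]; first by rewrite coefB coef1 coefX subr0 oner_neq0.
rewrite (tail_polyE (leq_addl n.+1 N)) coefD coefXn ltn_eqF ?leq_addr // addr0.
rewrite coefM; apply: eq_bigr => i _.
by rewrite coef_poly ltn_addr // ltnS leq_subr.
Qed.

Lemma horner_tail_poly (y : RF) M : (N <= M)%N -> y != 1 ->
  (map_poly ratF (tail_poly N c)).[y] / (map_poly ratF (1 - 'X)).[y]
    = \sum_(i < M) ratF (c i) * y ^+ i + y ^+ M / (1 - y).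
Proof.
move=> NM y_neq1; have y1_neq0 : 1 - y != 0 by rewrite subr_eq0 eq_sym.
rewrite (tail_polyE NM) rmorphD rmorphM hornerD hornerM horner_map_poly.
rewrite rmorphXn !rmorphB !rmorph1 /= !map_polyX !hornerE.
by rewrite mulrDl mulrAC mulfV ?mul1r.
Qed.

End TailPoly.

Lemma tofrac_horner p : tofrac p = (map_poly ratF p).[xRF].
Proof.
rewrite horner_coef size_map_poly -{1}[p]coefK poly_def rmorph_sum.
by apply: eq_bigr => i _; rewrite coef_map -mul_polyC rmorphM rmorphXn.
Qed.

Lemma eval_invE p : eval_inv p = (map_poly ratF p).[xRF^-1].
Proof.
rewrite /eval_inv horner_coef size_map_poly.
by apply: eq_bigr => i _; rewrite coef_map exprVn.
Qed.

Lemma xRF_neq0 : xRF != 0.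
Proof. by rewrite tofrac_eq0 polyX_eq0. Qed.

Lemma xRF_neq1 : xRF != 1.
Proof.
rewrite -tofrac1 tofrac_eq; apply/eqP => /(congr1 (coefp 1)) /eqP.
by rewrite /= coefX coef1 oner_eq0.
Qed.

Lemma big_undup_range (R : nmodType) (L : seq int) M (F : int -> R) :
  (forall a, a \in L -> 0 <= a < M%:Z) ->
  \sum_(a <- undup L) F a = \sum_(n < M | n%:Z \in L) F n%:Z.
Proof.
move=> L_range; rewrite -(big_mkord (fun n => n%:Z \in L) (fun n => F n%:Z)).
rewrite -(big_map Posz (mem L) F) -big_filter.
apply/perm_big/uniq_perm => [||a]; first exact: undup_uniq.
  by rewrite filter_uniq // map_inj_uniq ?iota_uniq // => m n [].
rewrite mem_undup mem_filter; apply/idP/andP => [a_L|[] //]; split=> //.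
by apply/mapP; exists (absz a); rewrite ?mem_iota; have := L_range a a_L; lia.
Qed.

Lemma mirror_series (F : fieldType) (x : F) (g : nat -> F) K : x != 0 ->
  x ^+ K * \sum_(i < K.+1) g i * x^-1 ^+ i = \sum_(n < K.+1) g (K - n)%N * x ^+ n.
Proof.
move=> x_neq0; rewrite big_distrr (reindex_inj rev_ord_inj) /=.
apply: eq_bigr => i _; rewrite subSS exprVn -{1}(subnKC (leq_ord i)) exprD.
by field; rewrite expf_neq0.
Qed.

Lemma geometric_tails (F : fieldType) (x : F) K : x != 0 -> x != 1 ->
  x ^+ K.+1 / (1 - x) + x ^+ K * (x^-1 ^+ K.+1 / (1 - x^-1))
    = - \sum_(n < K.+1) x ^+ n.
Proof.
move=> x_neq0 x_neq1; have x1_neq0 : x - 1 != 0 by rewrite subr_eq0.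
have -> : \sum_(n < K.+1) x ^+ n = (x ^+ K.+1 - 1) / (x - 1).
  by rewrite subrX1 mulrC mulKf.
rewrite exprVn exprSr; field.
by rewrite x1_neq0 x_neq0 expf_neq0 //= -opprB oppr_eq0.
Qed.

Lemma series_add_mirror (F : fieldType) (x : F) (f g : nat -> F) K :
  x != 0 -> x != 1 ->
  (\sum_(i < K.+1) f i * x ^+ i + x ^+ K.+1 / (1 - x))
    + x ^+ K * (\sum_(i < K.+1) g i * x^-1 ^+ i + x^-1 ^+ K.+1 / (1 - x^-1))
  = \sum_(n < K.+1) (f n + g (K - n)%N - 1) * x ^+ n.
Proof.
move=> x_neq0 x_neq1; rewrite mulrDr mirror_series // addrACA geometric_tails //.
by rewrite -big_split -sumrB /=; apply: eq_bigr => n _; rewrite !mulrDl mulNr mul1r.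
Qed.

Unset Implicit Arguments.

Theorem theorem5p1 (A : seq int) (b : nat) :
  0 \in A -> (forall a, a \in A -> 0 <= a) ->
  (b%:Z \in A) -> (forall a, a \in A -> a <= b%:Z) ->
  gcd_set A = 1 ->
  exists (p0 q0 pb qb : {poly rat}),
    (* sigma_0(x) = sum_n [n in T_0(A)] x^n is the expansion of p0/q0 *)
    expands (fun n => ind (inT A 0 n%:Z)) p0 q0 /\
    (* sigma_b, as a series in y = x^{-1}: sum_n [-n in T_b(A)] y^n = pb(y)/qb(y) *)
    expands (fun n => ind (inT A b%:Z (- n%:Z))) pb qb /\
    forall h : nat, (2 * b%:Z - 4 <= h%:Z) ->
      sigma_sumset A h =
        tofrac p0 / tofrac q0 + xRF ^+ (h * b)%N * (eval_inv pb / eval_inv qb).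
Proof.
move=> A0 A_ge0 Ab A_le gcd1.
have A_range a : a \in A -> 0 <= a <= b%:Z by move=> Aa; rewrite A_ge0 ?A_le.
have b_gt0 := gcd_set_range_gt0 A_range gcd1.
pose N := ((b - 1) * (b - 2))%N.
pose c0 n := ind (inT A 0 n%:Z); pose cb n := ind (inT A b%:Z (- n%:Z)).
have tails n (n_ge : (N <= n)%N) := ind_inT_large A0 Ab A_range b_gt0 gcd1 n_ge.
exists (tail_poly N c0), (1 - 'X), (tail_poly N cb), (1 - 'X).
split; first by apply: expands_tail_poly => n /tails[].
split; first by apply: expands_tail_poly => n /tails[].
move=> h h_large.
have NM : (N <= (h * b).+1)%N by rewrite /N; nia.
have xRFV_neq1 : xRF^-1 != 1 by rewrite invr_eq1 xRF_neq1.
rewrite !tofrac_horner (horner_tail_poly (fun n n_ge => (tails n n_ge).1) NM xRF_neq1).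
rewrite !eval_invE (horner_tail_poly (fun n n_ge => (tails n n_ge).2) NM xRFV_neq1).
rewrite (series_add_mirror (ratF \o c0) (ratF \o cb) _ xRF_neq0 xRF_neq1).
rewrite /sigma_sumset (@big_undup_range _ _ (h * b).+1); last first.
  by move=> a /(sumset_range A_range); lia.
rewrite big_mkcond; apply: eq_bigr => -[n /= n_lt] _.
rewrite -(rmorph1 ratF) -rmorphD -rmorphB.
rewrite (sumset_indicator A0 Ab A_range b_gt0 h_large gcd1 n_lt) rmorph_nat.
by case: ifP => _; rewrite ?mul1r ?mul0r.
Qed.
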